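(* Let $H$ be a Hermitian operator on a $d$-dimensional Hilbert space with spectral decomposition $H=\sum_{i=1}^M\lambda_i\Pi_i$, where $M\ge 2$, $\lambda_M>\cdots>\lambda_1$ are the distinct eigenvalues and $\Pi_i$ the spectral projections. Let $\Delta=\lambda_2-\lambda_1$, $d_G=\operatorname{Tr}[\Pi_1]$, and $\varepsilon>0$. If $$\beta=\frac{1}{\Delta}\ln\!\left[\left(\frac{1}{e^\varepsilon-1}\right)\left(\frac{d-d_G}{d_G}\right)\right]$$ and $\beta\ge 0$, then $$D\!\left(\frac{\Pi_1}{\operatorname{Tr}[\Pi_1]}\middle\|\frac{e^{-\beta H}}{\operatorname{Tr}[e^{-\beta H}]}\right)\le\varepsilon,$$ and the same inequality holds with $D$ replaced by $D_\alpha$, $\widetilde{D}_\alpha$, or $\widehat{D}_\alpha$ for every $\alpha\in(0,1)\cup(1,\infty)$.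
   Context: For states $\rho,\sigma$: $D(\rho\|\sigma)=\operatorname{Tr}[\rho(\ln\rho-\ln\sigma)]$ (quantum relative entropy); $D_\alpha(\rho\|\sigma)=\frac{1}{\alpha-1}\ln\operatorname{Tr}[\rho^\alpha\sigma^{1-\alpha}]$ (Petz–Rényi); $\widetilde{D}_\alpha(\rho\|\sigma)=\frac{1}{\alpha-1}\ln\operatorname{Tr}\!\left[\left(\sigma^{\frac{1-\alpha}{2\alpha}}\rho\,\sigma^{\frac{1-\alpha}{2\alpha}}\right)^\alpha\right]$ (sandwiched Rényi); $\widehat{D}_\alpha(\rho\|\sigma)=\frac{1}{\alpha-1}\ln\operatorname{Tr}\!\left[\sigma\left(\sigma^{-1/2}\rho\,\sigma^{-1/2}\right)^\alpha\right]$ (geometric Rényi). *)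

From HB Require Import structures.
From mathcomp Require Import all_boot all_order all_algebra.
From mathcomp Require Import sesquilinear spectral.
From mathcomp Require Import complex.
From mathcomp Require Import reals sequences.
From mathcomp.analysis Require Import exp.

Set Implicit Arguments.
Unset Strict Implicit.
Unset Printing Implicit Defensive.

Import Order.TTheory GRing.Theory Num.Theory.
Local Open Scope ring_scope.
Local Open Scope sesquilinear_scope.

Section QuantumDefs.
Variable R : realType.
Local Notation C := R[i].

Definition cr (x : R) : C := Complex x 0.

(* Functional calculus for a Hermitian (more generally normal) matrix A:
   if A = U^* diag(a) U with U unitary (spectral theorem, spectral.v),
   f(A) := U^* diag(f(Re a_k)) U. *)
Definition fun_mx n (f : R -> R) (A : 'M[C]_n) : 'M[C]_n :=
  let U := spectralmx A in
  (U ^t*) *m diag_mx (map_mx (fun z => cr (f (complex.Re z))) (spectral_diag A)) *m U.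

(* matrix exponential, logarithm (with the usual support convention ln 0 := 0,
   as for mathcomp-analysis' ln), and real powers (x `^ a, with 0 `^ a = 0
   for a <> 0, i.e. powers taken on the support) *)
Definition mx_exp n (A : 'M[C]_n) := fun_mx expR A.
Definition mx_ln n (A : 'M[C]_n) := fun_mx (@ln R) A.
Definition mx_pow n (A : 'M[C]_n) (a : R) := fun_mx (fun x => powR x a) A.

Definition rtr n (A : 'M[C]_n) : R := complex.Re (\tr A).

Definition qrel_ent n (rho sigma : 'M[C]_n) : R :=
  rtr (rho *m (mx_ln rho - mx_ln sigma)).

Definition petz_renyi n (a : R) (rho sigma : 'M[C]_n) : R :=
  (a - 1)^-1 * ln (rtr (mx_pow rho a *m mx_pow sigma (1 - a))).

Definition sandwiched_renyi n (a : R) (rho sigma : 'M[C]_n) : R :=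
  let s := mx_pow sigma ((1 - a) / (2 * a)) in
  (a - 1)^-1 * ln (rtr (mx_pow (s *m rho *m s) a)).

Definition geometric_renyi n (a : R) (rho sigma : 'M[C]_n) : R :=
  let s := mx_pow sigma (- (1 / 2)) in
  (a - 1)^-1 * ln (rtr (sigma *m mx_pow (s *m rho *m s) a)).

End QuantumDefs.

From HB Require Import structures.
From mathcomp Require Import all_boot all_order all_algebra.
From mathcomp Require Import sesquilinear spectral.
From mathcomp Require Import complex.
From mathcomp Require Import reals sequences.
From mathcomp.analysis Require Import exp.
From mathcomp Require Import ring lra.

Set Implicit Arguments.
Unset Strict Implicit.
Unset Printing Implicit Defensive.

Import Order.TTheory GRing.Theory Num.Theory.
Local Open Scope ring_scope.
Local Open Scope sesquilinear_scope.

(* The Gibbs state sigma and the normalised ground projection rho are both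
   functions of the spectral projections Pi_j, so every divergence reduces to
   a classical one between the distribution concentrated on the ground level
   and the Gibbs distribution; as rho lives on a single level, all of them
   equal -ln Tr[Pi_1 sigma] = ln (Z / (d_G e^(-beta lambda_1))).  Every excited
   level lies at least Delta above lambda_1, and beta is chosen so that
   e^(-beta Delta) (d - d_G) = (e^eps - 1) d_G; hence the excited part of the
   partition function Z is at most (e^eps - 1) times its ground part, i.e.
   Z <= e^eps d_G e^(-beta lambda_1). *)

Section RealEmbedding.
Variable R : realType.
Local Notation C := R[i].

Lemma crE (x : R) : cr x = real_complex R x. Proof. by []. Qed.

Lemma crV (x : R) : cr x^-1 = (cr x)^-1. Proof. by rewrite !crE fmorphV. Qed.

Lemma Re_cr (x : R) : complex.Re (cr x) = x. Proof. by []. Qed.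

Lemma rtrZ n (x : R) (A : 'M[C]_n) : rtr (cr x *: A) = x * rtr A.
Proof. by rewrite /rtr mxtraceZ; case: (\tr A) => u v; rewrite /= mul0r subr0. Qed.

Lemma rtr_sum n I (r : seq I) (P : pred I) (F : I -> 'M[C]_n) :
  rtr (\sum_(i <- r | P i) F i) = \sum_(i <- r | P i) rtr (F i).
Proof.
by rewrite /rtr (raddf_sum (@mxtrace _ n)) (raddf_sum (@complex.Re R : Rcomplex R -> R)).
Qed.

Lemma mxtrace_herm n (A : 'M[C]_n) : A ^t* = A -> \tr A = cr (rtr A).
Proof.
move=> hA; have trJ : (\tr A)^*%C = \tr A by rewrite -{2}hA trace_map_mx mxtrace_tr.
by rewrite crE /rtr ReJ_add trJ; field.
Qed.

End RealEmbedding.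

Lemma mxtrace_mul_adj_gt0 (C : numClosedFieldType) n (A : 'M[C]_n) :
  A != 0 -> 0 < \tr (A *m A ^t*).
Proof.
move=> nzA; have trE : \tr (A *m A ^t*) = \sum_a \sum_b `|A a b| ^+ 2.
  by apply: eq_bigr => a _; rewrite mxE; apply: eq_bigr => b _; rewrite !mxE normCK.
have [[a b] /= Aab] : exists ab : 'I_n * 'I_n, A ab.1 ab.2 != 0.
  apply/existsP; apply: contraR nzA; rewrite negb_exists => /forallP A0.
  by apply/eqP/matrixP => a b; rewrite mxE; apply/eqP/negbNE/(A0 (a, b)).
have sq_ge0 (x : C) : 0 <= `|x| ^+ 2 by rewrite exprn_ge0.
have row_ge0 a' : 0 <= \sum_b `|A a' b| ^+ 2 by apply: sumr_ge0.
rewrite trE lt0r sumr_ge0 // andbT psumr_neq0 //.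
apply/hasP; exists a; rewrite ?mem_index_enum //= lt0r row_ge0 andbT psumr_neq0 //.
by apply/hasP; exists b; rewrite ?mem_index_enum //= exprn_gt0 ?normr_gt0.
Qed.

Lemma rtr_proj_gt0 (R : realType) n (P : 'M[R[i]]_n) :
  P *m P = P -> P ^t* = P -> P != 0 -> 0 < rtr P.
Proof.
move=> Pidem Pherm nzP; have := mxtrace_mul_adj_gt0 nzP.
by rewrite Pherm Pidem /rtr; case: (\tr P) => u v /andP[].
Qed.

Lemma diag_mx_map_eigen (F : idomainType) n k (dl : 'rV[F]_n)
    (c : 'I_k -> F) (Q : 'I_k -> 'M[F]_n) (g : F -> F) :
  (forall j, diag_mx dl *m Q j = c j *: Q j) -> \sum_j Q j = 1%:M ->
  diag_mx (map_mx g dl) = \sum_j g (c j) *: Q j.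
Proof.
move=> eigQ sumQ; apply/matrixP => a b; rewrite summxE.
under eq_bigr => j _ do rewrite mxE.
transitivity (\sum_j g (dl 0 a) * Q j a b); last first.
  apply: eq_bigr => j _; have [->|nzQ] := eqVneq (Q j a b) 0; first by rewrite !mulr0.
  move/matrixP: (eigQ j) => /(_ a b); rewrite mul_diag_mx !mxE.
  by move/(mulIf nzQ) ->.
by rewrite -mulr_sumr -summxE sumQ !mxE mulr_natr.
Qed.

Section SpectralCombination.
Variables (R : realType) (n k : nat) (P : 'I_k -> 'M[R[i]]_n).
Hypothesis Pidem : forall i, P i *m P i = P i.
Hypothesis Pherm : forall i, (P i) ^t* = P i.
Hypothesis Porth : forall i j, i != j -> P i *m P j = 0.
Hypothesis Psum : \sum_i P i = 1%:M.

Definition proj_comb (x : 'I_k -> R) : 'M[R[i]]_n := \sum_j cr (x j) *: P j.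

Lemma proj_comb_mulP x j : proj_comb x *m P j = cr (x j) *: P j.
Proof.
rewrite mulmx_suml (bigD1 j) //= big1 ?addr0 => [|i /Porth Pij].
  by rewrite -scalemxAl Pidem.
by rewrite -scalemxAl Pij scaler0.
Qed.

Lemma proj_comb_mul x y : proj_comb x *m proj_comb y = proj_comb (fun j => x j * y j).
Proof.
rewrite {2}/proj_comb mulmx_sumr; apply: eq_bigr => j _.
by rewrite -scalemxAr proj_comb_mulP scalerA crE -rmorphM mulrC.
Qed.

Lemma proj_combB x y : proj_comb x - proj_comb y = proj_comb (fun j => x j - y j).
Proof. by rewrite -sumrB; apply: eq_bigr => j _; rewrite !crE rmorphB scalerBl. Qed.

Lemma proj_combZ a x : cr a *: proj_comb x = proj_comb (fun j => a * x j).
Proof. by rewrite scaler_sumr; apply: eq_bigr => j _; rewrite scalerA !crE rmorphM. Qed.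

Lemma proj_comb_adj x : (proj_comb x) ^t* = proj_comb x.
Proof.
apply/matrixP => a b; rewrite !mxE !summxE rmorph_sum; apply: eq_bigr => j _.
by rewrite !mxE rmorphM -{2}(Pherm j) !mxE; congr (_ * _); exact: conjc_real.
Qed.

Lemma rtr_proj_comb x : rtr (proj_comb x) = \sum_j x j * rtr (P j).
Proof. by rewrite rtr_sum; apply: eq_bigr => j _; rewrite rtrZ. Qed.

Lemma sum_rtr_proj : \sum_j rtr (P j) = n%:R.
Proof. by rewrite -rtr_sum Psum /rtr mxtrace1 -(rmorph_nat (real_complex R)). Qed.

Lemma fun_proj_comb f x : fun_mx f (proj_comb x) = proj_comb (fun j => f (x j)).
Proof.
set A := proj_comb x; set U := spectralmx A; set dl := spectral_diag A.
have /orthomx_spectralP : A \is normalmx by apply/normalmxP; rewrite proj_comb_adj.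
have uU : U \is unitarymx := spectral_unitarymx A.
rewrite invmx_unitary // -/U -/dl => AE.
have UUt : U *m U ^t* = 1%:M by apply/unitarymxP.
have UtU : U ^t* *m U = 1%:M by rewrite -[U ^t*]mul1mx mulmxKtV.
have diagE : diag_mx dl = U *m A *m U ^t*.
  by rewrite AE !mulmxA UUt mul1mx -mulmxA UUt mulmx1.
pose Q j := U *m P j *m U ^t*.
have eigQ j : diag_mx dl *m Q j = cr (x j) *: Q j.
  rewrite diagE /Q !mulmxA mulmxKtV // -[U *m A *m P j]mulmxA proj_comb_mulP.
  by rewrite -scalemxAr -scalemxAl.
have sumQ : \sum_j Q j = 1%:M by rewrite -mulmx_suml -mulmx_sumr Psum mulmx1.
rewrite /fun_mx -/U -/dl (diag_mx_map_eigen _ eigQ sumQ) mulmx_sumr mulmx_suml.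
apply: eq_bigr => j _; rewrite Re_cr -scalemxAr -scalemxAl /Q !mulmxA UtU mul1mx.
by rewrite -mulmxA UtU mulmx1.
Qed.


Definition flat_weights i : 'I_k -> R := fun j => if j == i then (rtr (P i))^-1 else 0.

Lemma flat_weights_id i : flat_weights i i = (rtr (P i))^-1.
Proof. by rewrite /flat_weights eqxx. Qed.

Lemma flat_weights_eq0 i j : j != i -> flat_weights i j = 0.
Proof. by rewrite /flat_weights => /negbTE ->. Qed.

Lemma flat_state_proj_comb i : (\tr (P i))^-1 *: P i = proj_comb (flat_weights i).
Proof.
rewrite /proj_comb (bigD1 i) //= big1 ?addr0 => [|j /flat_weights_eq0 ->].
  by rewrite flat_weights_id mxtrace_herm // crV.
by rewrite crE rmorph0 scale0r.
Qed.

Lemma rtr_proj_comb_flat i y : (forall j, j != i -> y j = 0) ->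
  rtr (proj_comb y) = y i * rtr (P i).
Proof.
move=> y0; rewrite rtr_proj_comb (bigD1 i) //= big1 ?addr0 // => j /y0 ->.
exact: mul0r.
Qed.

Section FlatStateDivergences.
(* Off the ground level the entries vanish through the conventions ln 0 = 0
   and 0 `^ a = 0 for a != 0 of [mx_ln] and [mx_pow]. *)
Variables (i : 'I_k) (s : 'I_k -> R).
Hypotheses (trP_gt0 : 0 < rtr (P i)) (s_gt0 : 0 < s i).
Let rho := proj_comb (flat_weights i).
Let sigma := proj_comb s.

Lemma qrel_ent_flat : qrel_ent rho sigma = - ln (rtr (P i) * s i).
Proof.
rewrite /qrel_ent /mx_ln !fun_proj_comb proj_combB proj_comb_mul.
rewrite (@rtr_proj_comb_flat i) => [|j /flat_weights_eq0 ->]; last exact: mul0r.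
rewrite flat_weights_id !lnM ?lnV ?posrE //; field; exact: lt0r_neq0.
Qed.

Lemma petz_renyi_flat a : 0 < a -> a != 1 ->
  petz_renyi a rho sigma = - ln (rtr (P i) * s i).
Proof.
move=> a_gt0 a_neq1; rewrite /petz_renyi /mx_pow !fun_proj_comb proj_comb_mul.
rewrite (@rtr_proj_comb_flat i) => [|j /flat_weights_eq0 ->]; last first.
  by rewrite powR0 ?mul0r ?lt0r_neq0.
rewrite flat_weights_id !lnM ?posrE ?mulr_gt0 ?powR_gt0 ?invr_gt0 //.
by rewrite !ln_powR lnV ?posrE //; field; rewrite subr_eq0.
Qed.

Lemma sandwiched_renyi_flat a : 0 < a -> a != 1 ->
  sandwiched_renyi a rho sigma = - ln (rtr (P i) * s i).
Proof.
move=> a_gt0 a_neq1; rewrite /sandwiched_renyi /mx_pow !fun_proj_comb !proj_comb_mul.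
rewrite fun_proj_comb (@rtr_proj_comb_flat i) => [|j /flat_weights_eq0 ->]; last first.
  by rewrite mulr0 mul0r powR0 ?lt0r_neq0.
set t := powR (s i) _; have t_gt0 : 0 < t by rewrite powR_gt0.
have td_gt0 : 0 < t / rtr (P i) by rewrite mulr_gt0 ?invr_gt0.
rewrite flat_weights_id !lnM ?posrE ?powR_gt0 ?mulr_gt0 ?invr_gt0 // ln_powR.
rewrite !lnM ?posrE ?invr_gt0 // /t ln_powR lnV ?posrE //; field.
by rewrite lt0r_neq0 // subr_eq0.
Qed.

Lemma geometric_renyi_flat a : 0 < a -> a != 1 ->
  geometric_renyi a rho sigma = - ln (rtr (P i) * s i).
Proof.
move=> a_gt0 a_neq1; rewrite /geometric_renyi /mx_pow !fun_proj_comb !proj_comb_mul.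
rewrite fun_proj_comb proj_comb_mul (@rtr_proj_comb_flat i) => [|j /flat_weights_eq0 ->].
  set t := powR (s i) _; have t_gt0 : 0 < t by rewrite powR_gt0.
  have td_gt0 : 0 < t / rtr (P i) by rewrite mulr_gt0 ?invr_gt0.
  rewrite flat_weights_id !lnM ?posrE ?mulr_gt0 ?powR_gt0 ?mulr_gt0 ?invr_gt0 // ln_powR.
  rewrite !lnM ?posrE ?invr_gt0 // /t ln_powR lnV ?posrE //; field.
  by rewrite subr_eq0.
by rewrite mulr0 mul0r powR0 ?lt0r_neq0 // mulr0.
Qed.

End FlatStateDivergences.

Definition partition_fn beta lam := \sum_j expR (- beta * lam j) * rtr (P j).

Lemma gibbs_state_proj_comb beta lam :
  let E := mx_exp (cr (- beta) *: proj_comb lam) in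
  (\tr E)^-1 *: E = proj_comb (fun j => (partition_fn beta lam)^-1 * expR (- beta * lam j)).
Proof.
rewrite /= /mx_exp proj_combZ fun_proj_comb mxtrace_herm ?proj_comb_adj //.
by rewrite rtr_proj_comb -crV proj_combZ.
Qed.

End SpectralCombination.

Section GibbsGroundPopulation.
Variables (R : realType) (k : nat) (lam w : 'I_k.+2 -> R) (beta eps : R).
Hypotheses (lam_incr : forall i j : 'I_k.+2, (i < j)%N -> lam i < lam j)
  (w_gt0 : forall j, 0 < w j) (eps_gt0 : 0 < eps) (beta_ge0 : 0 <= beta).
Let i1 : 'I_k.+2 := ord0.
Let i2 : 'I_k.+2 := lift ord0 ord0.
Let Z := \sum_j expR (- beta * lam j) * w j.
Let suppression := (expR eps - 1)^-1 * ((\sum_j w j - w i1) / w i1).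
Hypothesis betaE : beta = (lam i2 - lam i1)^-1 * ln suppression.

Lemma partition_gt0 : 0 < Z.
Proof.
rewrite /Z (bigD1 i1) //= ltr_pwDl ?mulr_gt0 ?expR_gt0 //.
by apply: sumr_ge0 => j _; rewrite mulr_ge0 ?expR_ge0 ?ltW.
Qed.

Lemma lam_ge_second j : j != i1 -> lam i2 <= lam j.
Proof.
have [-> //|j_neq2 j_neq1] := eqVneq j i2; apply/ltW/lam_incr.
by move: j j_neq1 j_neq2 => [[|[|j']] ?].
Qed.

Lemma excited_weight : \sum_j w j - w i1 = \sum_(j | j != i1) w j.
Proof. by rewrite (bigD1 i1) //= addrC addrK. Qed.

Lemma excited_weight_gt0 : 0 < \sum_(j | j != i1) w j.
Proof. by rewrite (bigD1 i2) //= ltr_pwDl // sumr_ge0 // => j _; exact/ltW. Qed.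

Lemma suppression_gt0 : 0 < suppression.
Proof.
rewrite /suppression excited_weight mulr_gt0 ?invr_gt0 ?subr_gt0 ?pexpR_gt1 //.
by rewrite divr_gt0 ?excited_weight_gt0.
Qed.

Lemma boltzmann_excited_le j : j != i1 ->
  expR (- beta * lam j) <= expR (- beta * lam i1) / suppression.
Proof.
move=> j_neq1; have gap_gt0 : 0 < lam i2 - lam i1 by rewrite subr_gt0 lam_incr.
have gapE : beta * (lam i2 - lam i1) = ln suppression.
  by rewrite betaE mulrAC mulVf ?mul1r ?lt0r_neq0.
rewrite -[suppression]lnK ?posrE ?suppression_gt0 // -expRN -expRD ler_expR -gapE.
have : 0 <= beta * (lam j - lam i2) by rewrite mulr_ge0 // subr_ge0 lam_ge_second.
nra.
Qed.

Lemma partition_le : Z <= expR eps * (expR (- beta * lam i1) * w i1).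
Proof.
set e1 := expR (- beta * lam i1).
have e1_gt0 : 0 < e1 := expR_gt0 _.
have excitedE :
    e1 / suppression * \sum_(j | j != i1) w j = (expR eps - 1) * (e1 * w i1).
  have eps1_gt0 : 0 < expR eps - 1 by rewrite subr_gt0 pexpR_gt1.
  rewrite /suppression excited_weight; field.
  by rewrite !lt0r_neq0 ?excited_weight_gt0 ?w_gt0.
have excited_le : \sum_(j | j != i1) expR (- beta * lam j) * w j <=
                  e1 / suppression * \sum_(j | j != i1) w j.
  by rewrite mulr_sumr ler_sum // => j /boltzmann_excited_le; rewrite ler_pM2r.
rewrite excitedE in excited_le; rewrite /Z (bigD1 i1) //= -/e1; nra.
Qed.

Lemma ground_population_bound :
  - ln (w i1 * (Z^-1 * expR (- beta * lam i1))) <= eps.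
Proof.
set e1 := expR (- beta * lam i1).
have e1_gt0 : 0 < e1 := expR_gt0 _.
have w1_gt0 := w_gt0 i1; have Z_gt0 := partition_gt0.
have pop_gt0 : 0 < w i1 * (Z^-1 * e1) by rewrite !mulr_gt0 ?invr_gt0.
rewrite -lnV ?posrE // -[eps]expRK ler_ln ?posrE ?invr_gt0 ?expR_gt0 //.
have -> : (w i1 * (Z^-1 * e1))^-1 = Z / (e1 * w i1).
  by field; rewrite !lt0r_neq0.
by rewrite ler_pdivrMr ?mulr_gt0 ?partition_le.
Qed.

End GibbsGroundPopulation.

Theorem corollary3 (R : realType) (d m : nat)
  (H : 'M[R[i]]_d) (lam : 'I_m.+2 -> R) (Pi : 'I_m.+2 -> 'M[R[i]]_d)
  (eps : R) :
  (forall i j : 'I_m.+2, (i < j)%N -> lam i < lam j) ->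
  (forall i : 'I_m.+2, Pi i *m Pi i = Pi i) ->
  (forall i : 'I_m.+2, (Pi i) ^t* = Pi i) ->
  (forall i j : 'I_m.+2, i != j -> Pi i *m Pi j = 0) ->
  (forall i : 'I_m.+2, Pi i != 0) ->
  \sum_(i < m.+2) Pi i = 1%:M ->
  H = \sum_(i < m.+2) cr (lam i) *: Pi i ->
  0 < eps ->
  let i1 : 'I_m.+2 := ord0 in
  let i2 : 'I_m.+2 := lift ord0 ord0 in
  let Delta := lam i2 - lam i1 in
  let dG := rtr (Pi i1) in
  let beta := Delta^-1 *
      ln ((expR eps - 1)^-1 * ((d%:R - dG) / dG)) in
  0 <= beta ->
  let rho := (\tr (Pi i1))^-1 *: Pi i1 in
  let E := mx_exp (cr (- beta) *: H) in
  let sigma := (\tr E)^-1 *: E in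
  qrel_ent rho sigma <= eps /\
  (forall a : R, 0 < a -> a != 1 ->
     [/\ petz_renyi a rho sigma <= eps,
         sandwiched_renyi a rho sigma <= eps &
         geometric_renyi a rho sigma <= eps]).
Proof.
move=> lam_incr Pidem Pherm Porth Pnz Psum HE eps_gt0 i1 i2 Delta dG beta beta_ge0.
move=> rho E sigma; pose s j := (partition_fn Pi beta lam)^-1 * expR (- beta * lam j).
have trPi_gt0 j : 0 < rtr (Pi j) := rtr_proj_gt0 (Pidem j) (Pherm j) (Pnz j).
have rhoE : rho = proj_comb Pi (flat_weights Pi i1) := flat_state_proj_comb Pherm i1.
have sigmaE : sigma = proj_comb Pi s.
  by rewrite /sigma /E HE (gibbs_state_proj_comb Pidem Pherm Porth Psum).
have s_gt0 : 0 < s i1 by rewrite mulr_gt0 ?invr_gt0 ?expR_gt0 ?partition_gt0.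
have bound : - ln (dG * s i1) <= eps.
  apply: ground_population_bound => //; rewrite /beta /Delta /dG.
  by rewrite (sum_rtr_proj Psum).
rewrite rhoE sigmaE (qrel_ent_flat Pidem Pherm Porth Psum) //; split=> // a a_gt0 a_neq1.
rewrite (petz_renyi_flat Pidem Pherm Porth Psum) //.
rewrite (sandwiched_renyi_flat Pidem Pherm Porth Psum) //.
by rewrite (geometric_renyi_flat Pidem Pherm Porth Psum).
Qed.
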